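(* Let $G$ be a group and $(\mathcal B_1,\Phi_1)\subseteq(\mathcal B_2,\Phi_2)$ a partial subaction of $G$ on generalized Boolean algebras, $\Phi_k=(\{\mathcal I_{k,t}\},\{\phi_{k,t}\})$, with $\mathcal B_1$ an ideal of $\mathcal B_2$. Let $$\mathcal B=\Big\{\bigcup_{i=1}^n\phi_{2,g_i}(V_i)\in\mathcal B_2: n\ge1,\ g_i\in G,\ V_i\in\mathcal B_1\cap\mathcal I_{2,g_i^{-1}}\Big\}.$$ Then $\mathcal B$ is a generalized Boolean algebra with $\mathcal B_1\subseteq\mathcal B\subseteq\mathcal B_2$, and $\mathcal B$ is an ideal of $\mathcal B_2$. Moreover, setting $\mathcal I_g=\mathcal B\cap\mathcal I_{2,g}$ (so $\mathcal I_{1,g}\subseteq\mathcal I_g\subseteq\mathcal I_{2,g}$), the restrictions $\phi_g$ of $\phi_{2,g}$ to $\mathcal I_{g^{-1}}$ are well-defined maps $\mathcal I_{g^{-1}}\to\mathcal I_g$ forming a partial action $\Phi$ of $G$ on $\mathcal B$, and $(\mathcal B_1,\Phi_1)\subseteq(\mathcal B,\Phi)\subseteq(\mathcal B_2,\Phi_2)$ are partial subactions.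
   Context: A generalized Boolean algebra is a distributive relatively complemented lattice with least element $0$ (joins $\cup$); an ideal is a subset closed under finite joins and under meets with arbitrary elements. A partial action $\Phi$ of $G$ on $\mathcal B$ consists of ideals $\mathcal I_t$ and lattice isomorphisms $\phi_t:\mathcal I_{t^{-1}}\to\mathcal I_t$ with $\mathcal I_e=\mathcal B$, $\phi_e=\mathrm{id}$, $\phi_s(\mathcal I_{s^{-1}}\cap\mathcal I_t)=\mathcal I_s\cap\mathcal I_{st}$, and $\phi_s\phi_t=\phi_{st}$ where defined. A partial subaction $(\mathcal B_1,\Phi_1)\subseteq(\mathcal B_2,\Phi_2)$: $\mathcal B_1$ is a sub generalized Boolean algebra of $\mathcal B_2$, $\mathcal I_{1,t}\subseteq\mathcal I_{2,t}$, and $\phi_{2,t}$ restricts to $\phi_{1,t}$ on $\mathcal I_{1,t^{-1}}$. *)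

(* generalized Boolean algebras are MathComp's
   cbDistrLatticeType (distributive lattices with bottom and sectional
   complement/difference); groups are (possibly infinite) groupType from
   boot/monoid.v; subsets are classical sets (mathcomp-classical). *)
From HB Require Import structures.
From mathcomp Require Import all_boot all_order.
From mathcomp Require Import boolp classical_sets.

Set Implicit Arguments.
Unset Strict Implicit.
Unset Printing Implicit Defensive.

Import Order.Theory.
Local Open Scope classical_set_scope.

Section Defs.
Context {d : Order.disp_t} {T : cbDistrLatticeType d} {G : groupType}.

Definition subGBA (S : set T) : Prop :=
  [/\ S \bot%O,
      (forall x y, S x -> S y -> S (Order.join x y)),
      (forall x y, S x -> S y -> S (Order.meet x y)) &
      (forall x y, S x -> S y -> S (Order.diff x y))].

Definition ideal_of (S I : set T) : Prop :=
  [/\ I `<=` S, I \bot%O,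
      (forall x y, I x -> I y -> I (Order.join x y)) &
      (forall x y, I x -> S y -> I (Order.meet x y))].

(* f is a lattice isomorphism from A onto B (f given as a total map on T
   whose restriction to A is considered). *)
Definition lattice_iso_on (f : T -> T) (A B : set T) : Prop :=
  [/\ (forall x, A x -> B (f x)),
      (forall x y, A x -> A y -> f x = f y -> x = y),
      (forall y, B y -> exists2 x, A x & f x = y),
      (forall x y, A x -> A y -> f (Order.join x y) = Order.join (f x) (f y)) &
      (forall x y, A x -> A y -> f (Order.meet x y) = Order.meet (f x) (f y))].

(* A partial action (I, phi) of G on the generalized Boolean algebra S;
   phi t is the map I (t^-1) -> I t (the restriction of phi t). *)
Definition partial_action (S : set T) (I : G -> set T) (phi : G -> T -> T)
  : Prop :=
  [/\ subGBA S,
      (forall t, ideal_of S (I t)),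
      I 1%g = S &
      (forall x, S x -> phi 1%g x = x)] /\
  [/\ (forall t, lattice_iso_on (phi t) (I (t^-1)%g) (I t)),
      (forall s t, phi s @` (I (s^-1)%g `&` I t) = I s `&` I (s * t)%g) &
      (forall s t x, I (t^-1)%g x -> I (s^-1)%g (phi t x) ->
         phi s (phi t x) = phi (s * t)%g x)].

Definition partial_subaction (S1 : set T) (I1 : G -> set T)
  (phi1 : G -> T -> T) (S2 : set T) (I2 : G -> set T) (phi2 : G -> T -> T)
  : Prop :=
  [/\ subGBA S1, S1 `<=` S2,
      (forall t, I1 t `<=` I2 t) &
      (forall t x, I1 (t^-1)%g x -> phi2 t x = phi1 t x)].

Definition orbit_joins (B1 : set T) (I2 : G -> set T) (phi2 : G -> T -> T)
  : set T :=
  [set x | exists n : nat, exists g : 'I_n.+1 -> G, exists V : 'I_n.+1 -> T,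
     (forall i, B1 (V i) /\ I2 ((g i)^-1)%g (V i)) /\
     x = \join_(i < n.+1) phi2 (g i) (V i)]%O.

End Defs.

(* B is the join closure of the terms phi_g(V) with V in B1 and in I_{g^-1}.
   Terms are closed under meets with arbitrary y: phi_g(V) `&` y = phi_g(V `&` W)
   for W = phi_{g^-1}(phi_g(V) `&` y), and V `&` W stays in the ideal B1.  The
   map phi_h sends a term phi_g(V) of its domain to the term phi_{hg}(V); as
   phi_h preserves joins on its downward closed domain, B is an ideal of B2
   stable under the partial action.  Finally a partial action restricts to any
   stable sub generalized Boolean algebra B, with the ideals B `&` I_{2,g}. *)

From mathcomp Require Import all_boot all_order.
From mathcomp Require Import boolp classical_sets.

Set Implicit Arguments.
Unset Strict Implicit.
Unset Printing Implicit Defensive.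

Import Order.Theory.
Local Open Scope classical_set_scope.

Section Ideals.
Context {d : Order.disp_t} {T : cbDistrLatticeType d}.
Local Open Scope order_scope.

Lemma ideal_le (J : set T) x y : ideal_of [set: T] J -> J y -> x <= y -> J x.
Proof. by case=> _ _ _ J_meet Jy /meet_idPr <-; apply: J_meet. Qed.

Lemma subGBA_ideal (J : set T) : ideal_of [set: T] J -> subGBA J.
Proof.
move=> J_ideal; have [_ J0 J_join J_meet] := J_ideal.
split=> // x y Jx _; first exact: J_meet.
exact: ideal_le J_ideal Jx (leBx x y).
Qed.

Definition join_closure (E : set T) : set T :=
  [set x | exists2 s : seq T, {in s, forall e, E e} & x = \join_(e <- s) e].

Lemma join_closure_sub (E : set T) : E `<=` join_closure E.
Proof. by move=> e Ee; exists [:: e]; [move=> _ /[1!inE] /eqP -> | rewrite big_seq1]. Qed.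

Lemma join_closure_ideal (E : set T) :
  (forall e y, E e -> E (e `&` y)) -> ideal_of [set: T] (join_closure E).
Proof.
move=> E_meet; split=> //.
- by exists [::]; rewrite ?big_nil.
- move=> _ _ [s Es ->] [r Er ->]; exists (s ++ r); last by rewrite big_cat.
  by move=> e; rewrite mem_cat => /orP[/Es|/Er].
- move=> _ y [s Es ->] _; exists [seq e `&` y | e <- s].
    by move=> _ /mapP[e /Es Ee ->]; apply: E_meet.
  by rewrite big_map (big_morph (Order.meet^~ y) (fun a b => meetUl a b y) (meet0x y)).
Qed.

Lemma join_closure_image (E J : set T) (f : T -> T) x :
  ideal_of [set: T] J -> f \bot = \bot ->
  (forall a b, J a -> J b -> f (a `|` b) = f a `|` f b) ->
  (forall e, E e -> J e -> E (f e)) ->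
  join_closure E x -> J x -> join_closure E (f x).
Proof.
move=> J_ideal f0 fU f_E [s Es ->] Jx.
have Js e : e \in s -> J e by move=> es; apply: ideal_le J_ideal Jx (joins_sup_seq id es isT).
exists [seq f e | e <- s].
  by move=> _ /mapP[e es ->]; apply: f_E (Es e es) (Js e es).
have [_ J0 J_join _] := J_ideal.
have [_ ->] : J (\join_(e <- s) e) /\ f (\join_(e <- s) e) = \join_(e <- s) f e.
  rewrite !big_seq; apply: (big_ind2 (fun a b => J a /\ f a = b)) => //.
  - by move=> a1 _ a2 _ [Ja1 <-] [Ja2 <-]; split; [apply: J_join | apply: fU].
  - by move=> e /Js.
by rewrite big_map.
Qed.

End Ideals.

Section PartialActionTheory.
Context {d : Order.disp_t} {T : cbDistrLatticeType d} {G : groupType}.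
Variables (S : set T) (I : G -> set T) (phi : G -> T -> T).
Hypothesis PA : partial_action S I phi.
Local Open Scope order_scope.

Lemma pact_bot t : phi t \bot = \bot.
Proof.
have [[_ I_ideal _ _] [phi_iso _ _]] := PA.
have [_ _ phi_onto _ phi_meet] := phi_iso t.
have [[_ It0 _ _] [_ Iti0 _ _]] := (I_ideal t, I_ideal t^-1%g).
have [x Itix phix0] := phi_onto _ It0.
by rewrite -[in LHS](meet0x x) phi_meet // phix0 meetx0.
Qed.

Lemma pactK t x : I t^-1%g x -> phi t^-1%g (phi t x) = x.
Proof.
have [[_ I_ideal I1 phi1] [phi_iso _ phi_mul]] := PA.
have [phi_to _ _ _ _] := phi_iso t; have [Iti_S _ _ _] := I_ideal t^-1%g.
move=> Itix; rewrite phi_mul ?mulVg ?phi1 ?I1 ?invgK //; first exact: Iti_S.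
exact: phi_to.
Qed.

Lemma pactVK t x : I t x -> phi t (phi t^-1%g x) = x.
Proof. by have := pactK (t := t^-1%g) (x := x); rewrite invgK. Qed.

Lemma pact_dom_mul g h x :
  I h^-1%g x -> I g^-1%g (phi h x) -> I (g * h)^-1%g x.
Proof.
have [_ [phi_iso phi_img _]] := PA.
have [phi_to _ _ _ _] := phi_iso h.
move=> Ihix Igihx.
have : (I h^-1%g `&` I (h^-1 * g^-1)%g)%classic (phi h^-1%g (phi h x)).
  by rewrite -phi_img; exists (phi h x); rewrite ?invgK //; split=> //; apply: phi_to.
by rewrite pactK // -invgM => -[].
Qed.

Lemma partial_action_restrict (B : set T) :
  subGBA B -> (B `<=` S)%classic ->
  (forall g x, B x -> I g^-1%g x -> B (phi g x)) ->
  partial_action B (fun g => B `&` I g)%classic phi.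
Proof.
move=> B_GBA B_S B_inv; have [[_ I_ideal I1 phi1] [phi_iso phi_img phi_mul]] := PA.
have [B0 B_join B_meet _] := B_GBA.
have B_invK g y : B y -> I g y -> B (phi g^-1%g y).
  by move=> By Igy; apply: B_inv; rewrite ?invgK.
split; split=> //.
- move=> t; have [_ It0 It_join It_meet] := I_ideal t.
  split=> [x []//|//|x y [Bx Itx] [By Ity]|x y [Bx Itx] By]; split; auto.
- by rewrite I1; apply/seteqP; split=> [x []|x Bx] //; split=> //; apply: B_S.
- by move=> x /B_S; apply: phi1.
- move=> t; have [phi_to phi_inj phi_onto phi_join phi_meet] := phi_iso t.
  split=> [x [Bx Itix]|x y [_ Itix] [_ Itiy]|y [By Ity]|x y [_ Itix] [_ Itiy]|x y [_ Itix] [_ Itiy]].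
  + by split; [apply: B_inv | apply: phi_to].
  + exact: phi_inj.
  + have [x Itix phix] := phi_onto y Ity.
    have Bx : B x by rewrite -(pactK Itix) phix; apply: B_invK.
    by exists x.
  + exact: phi_join.
  + exact: phi_meet.
- move=> s t; apply/seteqP; split.
  + move=> _ [x [[Bx Isix] [_ Itx]] <-].
    have [] : (I s `&` I (s * t)%g)%classic (phi s x) by rewrite -phi_img; exists x.
    by split; split=> //; apply: B_inv.
  + move=> y [[By Isy] [_ Isty]].
    have [x [Isix Itx] phix] : (phi s @` (I s^-1%g `&` I t))%classic y by rewrite phi_img.
    have Bx : B x by rewrite -(pactK Isix) phix; apply: B_invK.
    by exists x.
- by move=> s t x [_ Itix] [_ Isi]; apply: phi_mul.
Qed.

End PartialActionTheory.

Section OrbitJoins.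
Context {d : Order.disp_t} {T : cbDistrLatticeType d} {G : groupType}.
Variables (B1 : set T) (I : G -> set T) (phi : G -> T -> T).
Hypothesis PA : partial_action [set: T] I phi.
Hypothesis B1_ideal : ideal_of [set: T] B1.
Local Open Scope order_scope.

Definition orbit_terms : set T :=
  [set x | exists g V, [/\ B1 V, I g^-1%g V & phi g V = x]].

Lemma sub_orbit_terms : B1 `<=` orbit_terms.
Proof.
have [[_ _ I1 phi1] _] := PA.
by move=> V B1V; exists 1%g, V; rewrite invg1 I1 phi1.
Qed.

Lemma orbit_terms_meet e y : orbit_terms e -> orbit_terms (e `&` y).
Proof.
have [[_ I_ideal _ _] [phi_iso _ _]] := PA.
move=> [g [V [B1V IgiV <-]]].
have [phi_to _ _ _ phi_meet] := phi_iso g.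
have [_ _ _ Ig_meet] := I_ideal g; have [_ _ _ Igi_meet] := I_ideal g^-1%g.
have [_ _ _ B1_meet] := B1_ideal.
set W := phi g^-1%g (phi g V `&` y).
have [phigi_to _ _ _ _] := phi_iso g^-1%g.
have IgVy : I g (phi g V `&` y) by apply: Ig_meet => //; apply: phi_to.
have IgiW : I g^-1%g W by apply: phigi_to; rewrite invgK.
have phiW : phi g W = phi g V `&` y := pactVK PA IgVy.
exists g, (W `&` V); split.
- by rewrite meetC; apply: B1_meet.
- exact: Igi_meet.
- by rewrite phi_meet // phiW meetAC meetxx.
Qed.

Lemma orbit_terms_act g e : orbit_terms e -> I g^-1%g e -> orbit_terms (phi g e).
Proof.
have [_ [_ _ phi_mul]] := PA.
move=> [h [V [B1V IhiV <-]]] Igi.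
exists (g * h)%g, V; split=> //; first exact: (pact_dom_mul PA IhiV Igi).
by rewrite phi_mul.
Qed.

Lemma orbit_joinsE : orbit_joins B1 I phi = join_closure orbit_terms.
Proof.
apply/seteqP; split=> x.
  move=> [n [g [V [gV ->]]]]; exists [seq phi (g i) (V i) | i <- enum 'I_n.+1].
    by move=> _ /mapP[i _ ->]; have [B1Vi IgiVi] := gV i; exists (g i), (V i).
  by rewrite big_map big_enum.
move=> [[|e s] Es ->].
  exists 0%N, (fun=> 1%g), (fun=> \bot); split; last by rewrite big_nil big_ord1 (pact_bot PA).
  by have [_ B1_0 _ _] := B1_ideal; have [[_ I_ideal _ _] _] := PA; case: (I_ideal 1^-1%g).
have /choice[gV gVP] (i : 'I_(size s).+1) :
    exists gV : G * T, [/\ B1 gV.2, I gV.1^-1%g gV.2 & phi gV.1 gV.2 = nth \bot (e :: s) i].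
  by have [g [V []]] := Es _ (mem_nth \bot (ltn_ord i : i < size (e :: s))%N); exists (g, V).
exists (size s), (fun i => (gV i).1), (fun i => (gV i).2); split.
  by move=> i; have [] := gVP i.
rewrite (big_nth \bot) big_mkord; apply: eq_bigr => i _.
by have [_ _ ->] := gVP i.
Qed.

Lemma orbit_joins_ideal : ideal_of [set: T] (orbit_joins B1 I phi).
Proof. by rewrite orbit_joinsE; apply: join_closure_ideal orbit_terms_meet. Qed.

Lemma sub_orbit_joins : B1 `<=` orbit_joins B1 I phi.
Proof. by rewrite orbit_joinsE => V /sub_orbit_terms /join_closure_sub. Qed.

Lemma orbit_joins_act g x :
  orbit_joins B1 I phi x -> I g^-1%g x -> orbit_joins B1 I phi (phi g x).
Proof.
have [[_ I_ideal _ _] [phi_iso _ _]] := PA; have [_ _ _ phi_join _] := phi_iso g.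
rewrite orbit_joinsE; apply: join_closure_image (I_ideal _) (pact_bot PA g) phi_join _.
exact: orbit_terms_act.
Qed.

End OrbitJoins.

Theorem lemma4p11 (G : groupType) (d : Order.disp_t) (T : cbDistrLatticeType d)
  (B1 : set T) (I1 I2 : G -> set T) (phi1 phi2 : G -> T -> T) :
  partial_action [set: T] I2 phi2 ->
  partial_action B1 I1 phi1 ->
  partial_subaction B1 I1 phi1 [set: T] I2 phi2 ->
  ideal_of [set: T] B1 ->
  let B := orbit_joins B1 I2 phi2 in
  let I := fun g : G => B `&` I2 g in
  [/\ subGBA B, B1 `<=` B & ideal_of [set: T] B] /\
  (forall g, I1 g `<=` I g /\ I g `<=` I2 g) /\
  (forall g x, I (g^-1)%g x -> I g (phi2 g x)) /\
  [/\ partial_action B I phi2,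
      partial_subaction B1 I1 phi1 B I phi2 &
      partial_subaction B I phi2 [set: T] I2 phi2].
Proof.
move=> PA2 PA1 [B1_GBA _ I1_I2 phi2_phi1] B1_ideal B I.
have B_ideal : ideal_of [set: T] B := orbit_joins_ideal PA2 B1_ideal.
have B_GBA := subGBA_ideal B_ideal.
have B1_B : B1 `<=` B := sub_orbit_joins PA2 B1_ideal.
have PA : partial_action B I phi2.
  apply: (partial_action_restrict PA2 B_GBA (subsetT _)).
  by move=> g x; apply: orbit_joins_act.
have [[_ I1_ideal _ _] _] := PA1.
have I1_I g : I1 g `<=` I g.
  by move=> x I1x; have [I1_B1 _ _ _] := I1_ideal g; split; [apply/B1_B/I1_B1 | apply: I1_I2].
split=> //; split=> [g|]; first by split=> // x [].
split.
  by move=> g; have [_ [phi_iso _ _]] := PA; have [phi_to _ _ _ _] := phi_iso g.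
by split=> //; split=> // g x [].
Qed.
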